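(* Let $\ell$, $n$, $s$ be positive integers with $s\le n$. For a positive integer $\ell'$, let $\mathrm{CAN}(n,\ell';s)$ be the set of $n\times n$ matrices of the block diagonal form $\operatorname{diag}(Q_s, I_{n-s})$, where $Q_s$ is a rational orthogonal matrix of order $s$ and level $\ell'$ each of whose entries is either $0$ or a non-integer rational number, and $I_{n-s}$ is the identity of order $n-s$. Then $$\sum_{\ell'\mid\ell}\big|\mathrm{CAN}(n,\ell';s)\big|\le (2s)^{\ell^2 s}.$$
   Context: A rational orthogonal matrix is a square matrix $Q$ with rational entries and $Q^\top Q=I$. The level of a rational matrix $M$ is the smallest positive integer $\ell$ such that $\ell M$ has integer entries. The sum ranges over all positive divisors $\ell'$ of $\ell$. *)

From HB Require Import structures.
From mathcomp Require Import all_boot all_order all_algebra.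
Set Implicit Arguments. Unset Strict Implicit. Unset Printing Implicit Defensive.
Import Order.TTheory GRing.Theory Num.Theory.
Local Open Scope ring_scope.

Definition rat_orthogonal (s : nat) (Q : 'M[rat]_s) : Prop := Q^T *m Q = 1%:M.

Definition integral_multiple (m k : nat) (M : 'M[rat]_m) : Prop :=
  forall i j, k%:R * M i j \is a Num.int.

Definition has_level (m : nat) (M : 'M[rat]_m) (l : nat) : Prop :=
  (0 < l)%N /\ integral_multiple l M /\
  (forall k : nat, (0 < k)%N -> integral_multiple k M -> (l <= k)%N).

Definition entries_zero_or_nonint (m : nat) (M : 'M[rat]_m) : Prop :=
  forall i j, M i j = 0 \/ M i j \isn't a Num.int.

Definition inCAN (n l' s : nat) (hs : (s <= n)%N) (M : 'M[rat]_n) : Prop :=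
  exists Q : 'M[rat]_s,
    [/\ rat_orthogonal Q, has_level Q l', entries_zero_or_nonint Q &
        M = castmx (subnKC hs, subnKC hs) (block_mx Q 0 0 (1%:M : 'M[rat]_(n - s)))].

From HB Require Import structures.
From mathcomp Require Import all_boot all_order all_algebra zify ring.
From Stdlib Require Import ClassicalEpsilon.
Import Order.TTheory GRing.Theory Num.Theory.
Local Open Scope ring_scope.

(* If Q is rational orthogonal and l Q is integral, every column z of l Q is an
   integer vector with |z|^2 = l^2; its l1-norm is then at most l^2 and has the
   same parity, so z is a sum of exactly l^2 signed unit vectors +-e_i.  Hence
   every matrix of level dividing l is encoded by a choice of l^2 signed units
   for each of its s columns, which leaves at most (2s)^(l^2 s) matrices; and
   the sets CAN(n, l'; s) are pairwise disjoint because the level is unique. *)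

Section SignedUnits.

Context {s : nat}.

Definition signed_unit (x : 'I_s * bool) (i : 'I_s) : int :=
  if i == x.1 then (-1) ^+ x.2 else 0.

Definition l1norm (v : 'I_s -> int) : nat := (\sum_i `|v i|)%N.

Lemma l1norm_eq0 (v : 'I_s -> int) : l1norm v = 0%N -> forall i, v i = 0.
Proof.
move=> /eqP; rewrite sum_nat_eq0 => /forallP v0 i.
by apply/eqP; rewrite -absz_eq0; exact: (implyP (v0 i)).
Qed.

Lemma l1norm_sub_signed_unit (v : 'I_s -> int) (x : 'I_s * bool) :
  l1norm (fun j => v j - signed_unit x j)
  = (l1norm v - `|v x.1| + `|v x.1 - (-1) ^+ x.2|)%N.
Proof.
rewrite /l1norm (bigD1 x.1) //= [in RHS](bigD1 x.1) //= /signed_unit eqxx.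
rewrite (eq_bigr (fun j => `|v j|%N)) => [|j /negPf ->]; last by rewrite subr0.
lia.
Qed.

Lemma absz_sub_sign (z : int) : z != 0 -> (`|z - (-1) ^+ (z < 0)%R| = `|z| - 1)%N.
Proof. by case: ltrP => /= z_sign z_neq0; rewrite ?expr1 ?expr0; lia. Qed.

Lemma l1norm_sum_sqr (v : 'I_s -> int) :
  (l1norm v <= \sum_i `|v i| ^ 2)%N /\ l1norm v = (\sum_i `|v i| ^ 2)%N %[mod 2].
Proof.
split; first by apply: leq_sum => i _; nia.
rewrite /l1norm -modn_summ -[in RHS]modn_summ; congr modn.
by apply: eq_bigr => i _; rewrite !modn2 oddX.
Qed.

Lemma sum_sqr_absz (v : 'I_s -> int) :
  \sum_i v i ^+ 2 = (\sum_i `|v i| ^ 2)%N%:Z.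
Proof.
rewrite -natz natr_sum; apply: eq_bigr => i _.
by rewrite natz -abszX gez0_abs // sqr_ge0.
Qed.

Hypothesis s_gt0 : (0 < s)%N.

Lemma signed_unit_decomposition (L : nat) (v : 'I_s -> int) :
  (l1norm v <= L)%N -> l1norm v = L %[mod 2] ->
  exists t : L.-tuple ('I_s * bool), forall i, v i = \sum_(x <- t) signed_unit x i.
Proof.
elim: L v => [|L IH] v v_le v_mod.
  exists [tuple] => i; rewrite big_nil; apply: l1norm_eq0; lia.
have [x [x_le x_mod]] : exists x,
    (l1norm (fun j => v j - signed_unit x j)%R <= L)%N /\
    l1norm (fun j => v j - signed_unit x j)%R = L %[mod 2].
  have [v_l1|v_l1] := eqVneq (l1norm v) 0%N.
    (* Then L is odd by parity, so stepping to the unit vector -e_0 is allowed. *)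
    exists (Ordinal s_gt0, false).
    rewrite l1norm_sub_signed_unit v_l1 (l1norm_eq0 _ v_l1) /=; lia.
  have [i vi_neq0] : exists i, v i != 0.
    apply/existsP; apply: contraNT v_l1 => /existsPn v0.
    by apply/eqP/big1 => i _; rewrite (eqP (negPn (v0 i))).
  exists (i, v i < 0); rewrite l1norm_sub_signed_unit absz_sub_sign //.
  have : (`|v i| <= l1norm v)%N by rewrite /l1norm (bigD1 i) //=; lia.
  move: vi_neq0; rewrite -absz_eq0 /=; lia.
have [t t_sum] := IH _ x_le x_mod.
by exists [tuple of x :: t] => i; rewrite big_cons -t_sum; ring.
Qed.

Lemma sqr_norm_decomposition (L : nat) (v : 'I_s -> int) :
  \sum_i v i ^+ 2 = L%:Z ->
  exists t : L.-tuple ('I_s * bool), forall i, v i = \sum_(x <- t) signed_unit x i.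
Proof.
rewrite sum_sqr_absz => -[<-]; have [le mod] := l1norm_sum_sqr v.
exact: signed_unit_decomposition.
Qed.

End SignedUnits.

Section ScaledUnitSums.

Context {s : nat}.
Variable l : nat.

Definition scaled_unit_sum_mx (F : {ffun 'I_s -> (l ^ 2).-tuple ('I_s * bool)}) : 'M[rat]_s :=
  \matrix_(i, j) ((\sum_(x <- F j) signed_unit x i)%:~R / l%:R).

Lemma rat_orthogonal_col_norm (Q : 'M[rat]_s) j :
  rat_orthogonal Q -> \sum_i Q i j ^+ 2 = 1.
Proof.
move=> /(congr1 (fun A : 'M[rat]_s => A j j)); rewrite !mxE eqxx mulr1n => <-.
by apply: eq_bigr => i _; rewrite mxE.
Qed.

Hypotheses (s_gt0 : (0 < s)%N) (l_gt0 : (0 < l)%N).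

Lemma rat_orthogonal_scaled_unit_sum (Q : 'M[rat]_s) :
  rat_orthogonal Q -> integral_multiple l Q -> exists F, Q = scaled_unit_sum_mx F.
Proof.
move=> Q_orth Q_int; pose z i j := Num.floor (l%:R * Q i j).
have z_def i j : (z i j)%:~R = l%:R * Q i j by exact: floorK.
have col_sum j : exists t : (l ^ 2).-tuple ('I_s * bool),
    forall i, z i j = \sum_(x <- t) signed_unit x i.
  apply: sqr_norm_decomposition => //; apply: (@intr_inj rat).
  rewrite rmorph_sum (eq_bigr (fun i => l%:R ^+ 2 * Q i j ^+ 2)) => [|i _].
    by rewrite -mulr_sumr rat_orthogonal_col_norm // mulr1 -natz rmorph_nat natrX.
  by rewrite rmorphXn /= z_def exprMn.
have [T T_sum] := fin_all_exists col_sum.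
exists [ffun j => T j]; apply/matrixP => i j.
by rewrite mxE ffunE -T_sum z_def mulrC mulKf // pnatr_eq0 -lt0n.
Qed.

End ScaledUnitSums.

Lemma integral_multiple_dvdn (m k k' : nat) (M : 'M[rat]_m) :
  (k %| k')%N -> integral_multiple k M -> integral_multiple k' M.
Proof.
move=> /dvdnP[c ->] M_int i j.
by rewrite natrM -mulrA rpredM ?rpred_nat.
Qed.

Lemma has_level_unique (m a b : nat) (M : 'M[rat]_m) :
  has_level M a -> has_level M b -> a = b.
Proof.
move=> [a_gt0 [a_int a_min]] [b_gt0 [b_int b_min]].
by apply/eqP; rewrite eqn_leq a_min ?b_min.
Qed.

Definition pad_id_mx {n s : nat} (hs : (s <= n)%N) (Q : 'M[rat]_s) : 'M[rat]_n :=
  castmx (subnKC hs, subnKC hs) (block_mx Q 0 0 1%:M).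

Lemma pad_id_mx_inj (n s : nat) (hs : (s <= n)%N) : injective (pad_id_mx hs).
Proof.
move=> Q Q' /(congr1 (castmx (esym (subnKC hs), esym (subnKC hs)))).
by rewrite !castmxK => /(congr1 ulsubmx); rewrite !block_mxKul.
Qed.

Lemma inCAN_level_unique (n s a b : nat) (hs : (s <= n)%N) (M : 'M[rat]_n) :
  inCAN a hs M -> inCAN b hs M -> a = b.
Proof.
move=> [Q [_ Q_lvl _ ->]] [Q' [_ Q'_lvl _ /pad_id_mx_inj Q_eq]].
by apply: has_level_unique Q_lvl _; rewrite Q_eq.
Qed.

Lemma inCAN_scaled_unit_sum {n s l l' : nat} {hs : (s <= n)%N} {M : 'M[rat]_n} :
  (0 < s)%N -> (0 < l)%N -> (l' %| l)%N -> inCAN l' hs M ->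
  exists F, M = pad_id_mx hs (scaled_unit_sum_mx l F).
Proof.
move=> s_gt0 l_gt0 l'_dvd [Q [Q_orth [_ [Q_int _]] _ ->]].
have [F ->] : exists F, Q = scaled_unit_sum_mx l F.
  by apply: rat_orthogonal_scaled_unit_sum => //; exact: integral_multiple_dvdn Q_int.
by exists F.
Qed.

Lemma count_le1 (T : eqType) (p : pred T) (r : seq T) :
  uniq r -> {in r &, forall x y, p x -> p y -> x = y} -> (count p r <= 1)%N.
Proof.
move=> r_uniq p_uniq; rewrite -size_filter.
case r_p: (filter p r) => [|x t] //; rewrite -r_p.
apply: (@uniq_leq_size _ _ [:: x]); first exact: filter_uniq.
have x_in : x \in filter p r by rewrite r_p mem_head.
move=> y y_in; rewrite inE; move: x_in y_in; rewrite !mem_filter.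
by move=> /andP[px xr] /andP[py yr]; rewrite (p_uniq y x).
Qed.

Lemma sum_count_le_size {I T : eqType} (D : seq I) (P : I -> pred T) (r : seq T) :
  uniq D -> (forall x, {in D &, forall a b, P a x -> P b x -> a = b}) ->
  (\sum_(a <- D) count (P a) r <= size r)%N.
Proof.
move=> D_uniq P_disj; elim: r => [|x r IH]; first by rewrite big1.
rewrite /= big_split /= -add1n leq_add //.
rewrite -(big_map (fun a => P a x : nat) xpredT id) -sumnE sumn_count.
exact: count_le1.
Qed.

Definition decide (P : Prop) : bool :=
  if excluded_middle_informative P then true else false.

Lemma decideP (P : Prop) : reflect P (decide P).
Proof. by rewrite /decide; case: excluded_middle_informative => h; constructor. Qed.

Theorem mainTheorem4 (l n s : nat) (hl : (0 < l)%N) (hs0 : (0 < s)%N)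
    (hs : (s <= n)%N) :
  exists E : nat -> seq 'M[rat]_n,
    (forall l' : nat, l' \in divisors l ->
       uniq (E l') /\ (forall M : 'M[rat]_n, M \in E l' <-> inCAN l' hs M)) /\
    (\sum_(l' <- divisors l) size (E l') <= (2 * s) ^ (l ^ 2 * s))%N.
Proof.
pose candidates := undup (codom (fun F => pad_id_mx hs (scaled_unit_sum_mx l F))).
exists (fun l' => [seq M <- candidates | decide (inCAN l' hs M)]); split.
  move=> l' l'_dvd; split; first by rewrite filter_uniq ?undup_uniq.
  move=> M; rewrite mem_filter mem_undup; split => [/andP[/decideP //]|M_can].
  rewrite -dvdn_divisors // in l'_dvd.
  have [F M_eq] := inCAN_scaled_unit_sum hs0 hl l'_dvd M_can.
  by apply/andP; split; [apply/decideP | rewrite M_eq codom_f].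
under eq_bigr do rewrite size_filter.
apply: leq_trans (sum_count_le_size _ _ candidates (divisors_uniq l) _) _.
  by move=> M a b _ _ /decideP M_a /decideP M_b; exact: inCAN_level_unique M_a M_b.
rewrite (leq_trans (size_undup _)) // size_codom card_ffun card_tuple.
by rewrite !card_prod !card_ord card_bool -expnM mulnC.
Qed.
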